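(* Let $G$ be a dense $K_4^3\cup e$-free $3$-graph with $\lambda(G)>\frac{\sqrt3}{18}$. Then $G$ has at least $8$ vertices.
   Context: $K_4^3\cup e$ is the $3$-graph on $\{1,\dots,7\}$ with edges $\{123,124,134,234,567\}$. For a $3$-graph $G$ on $[n]$, $\lambda(G)=\max\{\sum_{e\in E(G)}\prod_{i\in e}x_i:\sum_ix_i=1,x_i\ge0\}$. An $r$-graph $G$ is dense if $\lambda(G')<\lambda(G)$ for every proper subgraph $G'$ of $G$. *)

From HB Require Import structures.
From mathcomp Require Import all_boot all_order all_algebra.
From mathcomp Require Import classical_sets reals.
Set Implicit Arguments. Unset Strict Implicit. Unset Printing Implicit Defensive.
Import Order.TTheory GRing.Theory Num.Theory.
Local Open Scope ring_scope.


Definition is_3graph (n : nat) (E : {set {set 'I_n}}) : Prop :=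
  forall e, e \in E -> #|e| = 3%N.

Definition lag_poly (R : realType) (n : nat) (E : {set {set 'I_n}})
  (x : 'I_n -> R) : R := \sum_(e in E) \prod_(i in e) x i.

Definition simplex_on (R : realType) (n : nat) (V : {set 'I_n})
  (x : 'I_n -> R) : Prop :=
  (forall i, 0 <= x i) /\ (forall i, i \notin V -> x i = 0) /\
  \sum_(i < n) x i = 1.

(* Lagrangian of the 3-graph (V, E): the maximum (= supremum, it is attained
   by compactness) of w_E over the simplex on V. *)
Definition lagrangian_on (R : realType) (n : nat) (V : {set 'I_n})
  (E : {set {set 'I_n}}) : R :=
  sup [set lag_poly E x | x in @simplex_on R n V]%classic.

Definition lagrangian (R : realType) (n : nat) (E : {set {set 'I_n}}) : R :=
  @lagrangian_on R n (finset.setT : {set 'I_n}) E.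

Definition dense (R : realType) (n : nat) (E : {set {set 'I_n}}) : Prop :=
  forall (V' : {set 'I_n}) (E' : {set {set 'I_n}}),
    E' \subset E -> (forall e, e \in E' -> e \subset V') ->
    (V' != (finset.setT : {set 'I_n})) || (E' != E) ->
    @lagrangian_on R n V' E' < @lagrangian R n E.

Definition K43e : {set {set 'I_7}} :=
  [set [set (inord 0 : 'I_7); inord 1; inord 2];
       [set (inord 0 : 'I_7); inord 1; inord 3];
       [set (inord 0 : 'I_7); inord 2; inord 3];
       [set (inord 1 : 'I_7); inord 2; inord 3];
       [set (inord 4 : 'I_7); inord 5; inord 6]].

Definition contains_copy (m n : nat) (F : {set {set 'I_m}})
  (E : {set {set 'I_n}}) : Prop :=
  exists f : 'I_m -> 'I_n, injective f /\ forall e, e \in F -> f @: e \in E.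

Definition K43e_free (n : nat) (E : {set {set 'I_n}}) : Prop :=
  ~ contains_copy K43e E.

From HB Require Import structures.
From mathcomp Require Import all_boot all_order all_algebra.
From mathcomp Require Import fingroup perm reals.
From mathcomp Require Import zify ring lra.
From mathcomp Require boolp classical_sets.
Set Implicit Arguments. Unset Strict Implicit. Unset Printing Implicit Defensive.
Import Order.TTheory GRing.Theory Num.Theory.
Local Open Scope ring_scope.

(* Suppose n <= 7.  A K_4^3 u e-free 3-graph on 7 vertices has at most 28 edges:
   every 4-set Q of vertices carries a K_4^3 u e pattern (the four triples inside Q
   and the complementary triple), one of which must be a non-edge, and each triple
   lies in five of the 35 patterns, so there are at least 7 non-edges.  Sorting the
   weights y_0 <= ... <= y_6, every non-edge weighs at least y_0 y_1 y_2, so the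
   Lagrangian polynomial is at most e_3(y) - 7 y_0 y_1 y_2, which is at most
   5/54 < sqrt 3 / 18 (with equality for K_6 plus an isolated vertex).  Fewer
   vertices are handled by adding isolated ones. *)

Lemma sorted_enum_ord n (t : {set 'I_n}) : sorted (relpre val ltn) (enum t).
Proof.
have -> : enum t = filter (mem t) (enum 'I_n) by rewrite enumT.
apply: sorted_filter; first by move=> a b c; apply: ltn_trans.
by rewrite -sorted_map val_enum_ord iota_ltn_sorted.
Qed.

Lemma enum_set3 n (i j k : 'I_n) :
  (i < j < k)%N -> enum [set i; j; k] = [:: i; j; k].
Proof.
move=> /andP[ij jk]; apply: (irr_sorted_eq (leT := relpre val ltn)).
- by move=> a b c; apply: ltn_trans.
- by move=> a; rewrite /= ltnn.
- exact: sorted_enum_ord.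
- by rewrite /= ij jk.
- by move=> l; rewrite mem_enum !inE orbA.
Qed.

Lemma card_set3 n (i j k : 'I_n) : (i < j < k)%N -> #|[set i; j; k]| = 3%N.
Proof. by move=> ijk; rewrite cardE enum_set3. Qed.

Lemma card3_ltn n (t : {set 'I_n}) :
  #|t| = 3%N -> exists i j k : 'I_n, (i < j < k)%N /\ t = [set i; j; k].
Proof.
move=> t3; have := sorted_enum_ord t; have := mem_enum t.
have : size (enum t) = 3%N by rewrite -cardE.
case: (enum t) => [|i [|j [|k []]]] //= _ memt /and3P[ij jk _].
exists i, j, k; rewrite ij jk; split=> //.
by apply/setP => l; rewrite -memt !inE orbA.
Qed.

Lemma sum_card3 (R : nmodType) n (F : {set 'I_n} -> R) :
  \sum_(t : {set 'I_n} | #|t| == 3%N) F t =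
  \sum_(i < n) \sum_(j < n) \sum_(k < n)
     (if (i < j < k)%N then F [set i; j; k] else 0).
Proof.
pose s3 (p : 'I_n * 'I_n * 'I_n) := [set p.1.1; p.1.2; p.2].
pose ltn3 (p : 'I_n * 'I_n * 'I_n) := (p.1.1 < p.1.2 < p.2)%N.
have s3_inj : {in ltn3 &, injective s3}.
  move=> [[i j] k] [[i' j'] k'] ijk ijk' /(congr1 (fun t : {set 'I_n} => enum t)).
  by rewrite !enum_set3 // => -[-> -> ->].
rewrite pair_big pair_big /= -big_mkcond.
rewrite -(big_imset _ s3_inj) /=; apply: eq_bigl => t.
apply/eqP/imsetP => [/card3_ltn[i [j [k [ijk ->]]]]|[[[i j] k] ijk ->]].
  by exists (i, j, k).
exact: card_set3.
Qed.

Definition triples n : {set {set 'I_n}} := [set t : {set 'I_n} | #|t| == 3%N].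

Lemma card_triples n : #|triples n| = 'C(n, 3).
Proof. by rewrite card_draws card_ord. Qed.

Lemma prod_set3 (R : comPzSemiRingType) n (F : 'I_n -> R) (i j k : 'I_n) :
  (i < j < k)%N -> \prod_(l in [set i; j; k]) F l = F i * F j * F k.
Proof.
by move=> ijk; rewrite -big_enum enum_set3 // !big_cons big_nil /= mulr1 mulrA.
Qed.

Section Transport.
Variables (R : realType) (n m : nat) (f : 'I_n -> 'I_m).
Hypothesis f_inj : injective f.

Definition push_weights (x : 'I_n -> R) (j : 'I_m) : R := \sum_(i | f i == j) x i.

Definition image_graph (E : {set {set 'I_n}}) : {set {set 'I_m}} :=
  [set f @: e | e : {set 'I_n} in E].

Lemma push_weights_image x i : push_weights x (f i) = x i.
Proof.
rewrite /push_weights (big_pred1 i) // => i'.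
by rewrite (inj_eq f_inj).
Qed.

Lemma push_weights_ge0 x : (forall i, 0 <= x i) -> forall j, 0 <= push_weights x j.
Proof. by move=> x_ge0 j; apply: sumr_ge0. Qed.

Lemma sum_push_weights x : \sum_j push_weights x j = \sum_i x i.
Proof. by rewrite [RHS](partition_big f predT). Qed.

Lemma card_image_graph E : #|image_graph E| = #|E|.
Proof. by apply: card_imset; apply: imset_inj. Qed.

Lemma image_graph_3graph E : is_3graph E -> is_3graph (image_graph E).
Proof.
by move=> E3 e' /imsetP[e eE ->]; rewrite card_imset //; apply: E3.
Qed.

Lemma lag_poly_image_graph E x :
  lag_poly (image_graph E) (push_weights x) = lag_poly E x.
Proof.
rewrite /lag_poly big_imset /=; last by move=> e e' _ _; apply: imset_inj.
apply: eq_bigr => e _; rewrite big_imset /=; last by move=> i i' _ _; apply: f_inj.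
by apply: eq_bigr => i _; rewrite push_weights_image.
Qed.

End Transport.

Lemma sorting_perm (R : realType) n (x : 'I_n -> R) :
  exists s : {perm 'I_n}, forall i j : 'I_n, (i <= j)%N -> x (s i) <= x (s j).
Proof.
case: n x => [|m] x; first by exists 1%g => -[].
pose leT (i j : 'I_m.+1) := x i <= x j.
pose sx := sort leT (enum 'I_m.+1).
have size_sx : size sx = m.+1 by rewrite size_sort size_enum_ord.
have sx_inj : injective (fun i : 'I_m.+1 => nth ord0 sx i).
  move=> i j /eqP; rewrite nth_uniq ?size_sx ?sort_uniq ?enum_uniq //.
  by move/eqP/val_inj.
exists (perm sx_inj) => i j ij; rewrite !permE.
have leT_trans : transitive leT by move=> k l p; apply: le_trans.
have leT_refl : reflexive leT by move=> k; apply: lexx.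
apply: (sorted_leq_nth leT_trans leT_refl); rewrite ?inE ?size_sx //.
by apply: sort_sorted => k l; apply: le_total.
Qed.

Section SortedWeights.
Variables (R : realType) (m : nat) (y : 'I_m.+1 -> R).

Lemma lag_poly_triples : lag_poly (triples _) y =
  \sum_(0 <= i < m.+1) \sum_(0 <= j < m.+1) \sum_(0 <= k < m.+1)
    (if (i < j < k)%N then y (inord i) * y (inord j) * y (inord k) else 0).
Proof.
rewrite /lag_poly /triples; under eq_bigl do rewrite inE.
rewrite sum_card3 big_mkord; apply: eq_bigr => i _; rewrite big_mkord.
apply: eq_bigr => j _; rewrite big_mkord; apply: eq_bigr => k _.
by rewrite !inord_val; case: ifP => // ijk; apply: prod_set3.
Qed.

Hypotheses (y_ge0 : forall i, 0 <= y i)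
  (y_sorted : forall i j : 'I_m.+1, (i <= j)%N -> y i <= y j).

Lemma prod_smallest3_le (t : {set 'I_m.+1}) : #|t| = 3%N ->
  y (inord 0) * y (inord 1) * y (inord 2) <= \prod_(l in t) y l.
Proof.
move=> /card3_ltn[i [j [k [/andP[ij jk] ->]]]]; rewrite prod_set3 ?ij //.
have y_inord a (l : 'I_m.+1) : (a <= l)%N -> y (inord a) <= y l.
  by move=> al; apply: y_sorted; rewrite inordK // (leq_ltn_trans al).
have j1 : (1 <= j)%N := leq_ltn_trans (leq0n i) ij.
have k2 : (2 <= k)%N := leq_ltn_trans j1 jk.
by rewrite ler_pM ?mulr_ge0 ?y_inord // ler_pM ?y_inord.
Qed.

Lemma lag_poly_add_nonedges_le (E : {set {set 'I_m.+1}}) : is_3graph E ->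
  lag_poly E y
  + (#|triples m.+1| - #|E|)%:R * (y (inord 0) * y (inord 1) * y (inord 2))
  <= lag_poly (triples m.+1) y.
Proof.
move=> E3.
have ET : E \subset triples _ by apply/subsetP => t /E3 t3; rewrite inE t3.
rewrite [X in _ <= X](big_setID E) /= (setIidPr ET) lerD2l.
have -> : (#|triples m.+1| - #|E| = #|triples m.+1 :\: E|)%N.
  by rewrite cardsD (setIidPr ET).
rewrite mulr_natl -sumr_const; apply: ler_sum => t.
by rewrite !inE => /andP[_ /eqP]; apply: prod_smallest3_le.
Qed.

End SortedWeights.

(* With b = a + u, c = b + v and S = 4 c + w this is a polynomial inequality in
   a, u, v, w >= 0, certified by the quadratic and cubic forms below. *)
Lemma merged_weights_bound (R : realFieldType) (a b c S : R) :
  0 <= a -> a <= b -> b <= c -> 4 * c <= S -> a + b + c + S = 1 ->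
  S ^+ 3 / 16 + 3 / 8 * (a + b + c) * S ^+ 2 + (a * b + b * c + c * a) * S
  - 6 * (a * b * c) <= 5 / 54.
Proof.
move=> a_ge0 ab bc cS sum1.
pose u := b - a; pose v := c - b; pose w := S - 4 * c.
have u_ge0 : 0 <= u by rewrite subr_ge0.
have v_ge0 : 0 <= v by rewrite subr_ge0.
have w_ge0 : 0 <= w by rewrite subr_ge0.
have quad_ge0 : 0 <= 17/3 * a^+2 - 4/3 * a*v - 5/3 * a*w + 1/6 * w^+2
                    + 2/3 * v*w + 5/3 * v^+2.
  have -> : 17/3 * a^+2 - 4/3 * a*v - 5/3 * a*w + 1/6 * w^+2 + 2/3 * v*w
            + 5/3 * v^+2 = 1/6 * (w + 2*v - 5*a)^+2 + (v + a)^+2 + a^+2 / 2.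
    by field.
  have := sqr_ge0 (w + 2*v - 5*a); have := sqr_ge0 (v + a); have := sqr_ge0 a; lra.
have cubic_ge0 : 0 <= 13/432 * w^+3 + 19/72 * v * w^+2 + 17/18 * v^+2 * w
    + 85/54 * v^+3 + 203/54 * a^+3 + a^+2 * (1/18 * v - 25/18 * w)
    + a * (- 25/18 * v^+2 - 5/9 * v * w + 5/72 * w^+2).
  have := mulr_ge0 a_ge0 (sqr_ge0 (19/10 * a - 4/10 * w)).
  have := mulr_ge0 w_ge0 (sqr_ge0 (3/10 * a - 1/6 * w)).
  have := mulr_ge0 (addr_ge0 a_ge0 v_ge0) (sqr_ge0 (a - v)).
  have := mulr_ge0 v_ge0 (sqr_ge0 (a - w)).
  have := mulr_ge0 v_ge0 (sqr_ge0 (v - a)).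
  have := mulr_ge0 (mulr_ge0 a_ge0 v_ge0) w_ge0.
  have := mulr_ge0 a_ge0 (sqr_ge0 (v - w)).
  have := mulr_ge0 w_ge0 (sqr_ge0 (v - a)).
  have := mulr_ge0 v_ge0 (sqr_ge0 (w - 2 * a)).
  nra.
have := mulr_ge0 u_ge0 quad_ge0; have := mulr_ge0 (mulr_ge0 u_ge0 u_ge0) a_ge0.
have -> : b = a + u by rewrite /u; ring.
have -> : c = a + u + v by rewrite /u /v; ring.
have -> : S = 1 - 3 * a - 2 * u - v by rewrite /u /v; lra.
have w_def : w = 1 - 7 * a - 6 * u - 5 * v by rewrite /w /u /v; lra.
rewrite w_def in cubic_ge0 |- *.
nra.
Qed.

Section FourVariables.
Variables (R : realFieldType) (d e f g : R).

Lemma esym4_3_le : 0 <= d -> 0 <= e -> 0 <= f -> 0 <= g ->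
  6 * (d*e*f + d*e*g + d*f*g + e*f*g)
  <= (d + e + f + g) * (d*e + d*f + d*g + e*f + e*g + f*g).
Proof.
move=> d0 e0 f0 g0; rewrite -subr_ge0.
have -> : (d + e + f + g) * (d*e + d*f + d*g + e*f + e*g + f*g)
    - 6 * (d*e*f + d*e*g + d*f*g + e*f*g)
  = (d * ((e-f)^+2 + (e-g)^+2 + (f-g)^+2) + e * ((d-f)^+2 + (d-g)^+2 + (f-g)^+2)
     + f * ((d-e)^+2 + (d-g)^+2 + (e-g)^+2) + g * ((d-e)^+2 + (d-f)^+2 + (e-f)^+2)) / 2
  by field.
by rewrite divr_ge0 // !addr_ge0 // mulr_ge0 // !addr_ge0 // sqr_ge0.
Qed.

Lemma esym4_2_le :
  8 * (d*e + d*f + d*g + e*f + e*g + f*g) <= 3 * (d + e + f + g)^+2.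
Proof.
rewrite -subr_ge0.
have -> : 3 * (d + e + f + g)^+2 - 8 * (d*e + d*f + d*g + e*f + e*g + f*g)
  = (d-e)^+2 + (d-f)^+2 + (d-g)^+2 + (e-f)^+2 + (e-g)^+2 + (f-g)^+2 by ring.
by rewrite !addr_ge0 // sqr_ge0.
Qed.

End FourVariables.

(* The left-hand side is e_3(a, ..., g) - 7 a b c. *)
Lemma seven_weights_bound (R : realFieldType) (a b c d e f g : R) :
  0 <= a -> a <= b -> b <= c -> c <= d -> c <= e -> c <= f -> c <= g ->
  a + b + c + d + e + f + g = 1 ->
  d*e*f + d*e*g + d*f*g + e*f*g + (a + b + c) * (d*e + d*f + d*g + e*f + e*g + f*g)
  + (a*b + b*c + c*a) * (d + e + f + g) - 6 * (a * b * c) <= 5 / 54.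
Proof.
move=> a0 ab bc cd ce cf cg sum1.
have [d0 e0 f0 g0] : [/\ 0 <= d, 0 <= e, 0 <= f & 0 <= g] by split; lra.
have e3_le := esym4_3_le d0 e0 f0 g0.
have e2_le := esym4_2_le d e f g.
have cS : 4 * c <= d + e + f + g by lra.
have sum4 : a + b + c + (d + e + f + g) = 1 by lra.
have weight_ge0 : 0 <= (d + e + f + g) / 6 + (a + b + c) by lra.
have := merged_weights_bound a0 ab bc cS sum4; have := ler_wpM2r weight_ge0 e2_le.
nra.
Qed.

Lemma sum_ord_inord (R : nmodType) m (F : 'I_m.+1 -> R) :
  \sum_(i < m.+1) F i = \sum_(0 <= i < m.+1) F (inord i).
Proof. by rewrite big_mkord; apply: eq_bigr => i _; rewrite inord_val. Qed.

Lemma lag_poly_sorted_le_5_54 (R : realType) (E : {set {set 'I_7}})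
    (y : 'I_7 -> R) :
  is_3graph E -> (#|E| <= 28)%N -> (forall i, 0 <= y i) ->
  (forall i j : 'I_7, (i <= j)%N -> y i <= y j) -> \sum_i y i = 1 ->
  lag_poly E y <= 5 / 54.
Proof.
move=> E3 E28 y_ge0 y_sorted sum1.
have := lag_poly_add_nonedges_le y_ge0 y_sorted E3.
rewrite card_triples (_ : 'C(7, 3) = 35%N) // lag_poly_triples.
rewrite [in X in _ <= X]unlock /=.
have y_inord a b : (a <= b < 7)%N -> y (inord a) <= y (inord b).
  by case/andP=> ab b7; apply: y_sorted; rewrite !inordK // (leq_ltn_trans ab).
have smallest_ge0 : 0 <= y (inord 0) * y (inord 1) * y (inord 2).
  by rewrite !mulr_ge0.
have nonedges_ge7 : 7 <= (35 - #|E|)%:R :> R by rewrite ler_nat; lia.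
have := ler_wpM2r smallest_ge0 nonedges_ge7.
have sum7 : y (inord 0) + y (inord 1) + y (inord 2) + y (inord 3) + y (inord 4)
    + y (inord 5) + y (inord 6) = 1.
  by move: sum1; rewrite sum_ord_inord unlock /=; lra.
have := seven_weights_bound (y_ge0 (inord 0)) (y_inord 0 1 isT)%N
  (y_inord 1 2 isT)%N (y_inord 2 3 isT)%N (y_inord 2 4 isT)%N
  (y_inord 2 5 isT)%N (y_inord 2 6 isT)%N sum7.
lra.
Qed.

Lemma lag_poly_le_5_54 (R : realType) (E : {set {set 'I_7}}) (x : 'I_7 -> R) :
  is_3graph E -> (#|E| <= 28)%N -> (forall i, 0 <= x i) -> \sum_i x i = 1 ->
  lag_poly E x <= 5 / 54.
Proof.
move=> E3 E28 x_ge0 sum1; have [s s_sorted] := sorting_perm x.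
have f_inj := @perm_inj _ (s^-1)%g.
have push_s j : push_weights (s^-1)%g x j = x (s j).
  by rewrite -{1}(permK s j) push_weights_image.
rewrite -(lag_poly_image_graph f_inj); apply: lag_poly_sorted_le_5_54.
- exact: image_graph_3graph.
- by rewrite card_image_graph.
- exact: push_weights_ge0.
- by move=> i j ij; rewrite !push_s s_sorted.
- by rewrite sum_push_weights.
Qed.

Lemma card_set_andE (T : finType) (P C : pred T) :
  #|[set x | P x & C x]| = (\sum_(x | P x) C x)%N.
Proof.
rewrite -sum1_card (eq_bigl (fun x => P x && C x)) => [|x]; last by rewrite inE.
by rewrite big_mkcondr; apply: eq_bigr => x _; case: (C x).
Qed.

Section K43ePattern.
Variable T : finType.
Implicit Types (Q t : {set T}) (E : {set {set T}}).

(* When #|T| = 7, the edge set of a copy of K_4^3 u e whose K_4^3 spans Q. *)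
Definition K43e_pattern Q : {set {set T}} :=
  [set Q :\ v | v in Q] :|: [set ~: Q].

Definition K43e_patterns_at t : {set {set T}} :=
  [set Q : {set T} | (#|Q| == 4%N) && (t \in K43e_pattern Q)].

Lemma card_K43e_pattern Q : (#|K43e_pattern Q| <= #|Q|.+1)%N.
Proof.
rewrite cardsU cards1 addn1; apply: leq_trans (leq_subr _ _) _.
by rewrite ltnS leq_imset_card.
Qed.

Hypothesis card7 : #|T| = 7%N.

Lemma card_K43e_patterns_at t : #|t| = 3%N -> (5 <= #|K43e_patterns_at t|)%N.
Proof.
move=> t3.
have tC4 : #|~: t| = 4%N by apply/eqP; rewrite -(eqn_add2l #|t|) cardsC card7 t3.
have tS_inj : {in ~: t &, injective (fun v => v |: t)}.
  move=> v w; rewrite !inE => vt _ vw.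
  by have := setU11 v t; rewrite vw !inE (negbTE vt) orbF => /eqP.
have tC_new : ~: t \notin [set v |: t | v in ~: t].
  apply/imsetP => -[v _ tCv].
  have /setIidPl : t \subset ~: t by rewrite tCv subsetU1.
  by rewrite setICr => t0; rewrite -t0 cards0 in t3.
have -> : 5%N = #|~: t |: [set v |: t | v in ~: t]|.
  by rewrite cardsU1 tC_new card_in_imset // tC4.
apply/subset_leq_card/subsetP => Q.
rewrite !inE => /orP[/eqP->|/imsetP[v vt ->]].
  by rewrite tC4 setCK !eqxx orbT.
rewrite cardsU1 t3 -in_setC vt /=; apply/orP; left.
by apply/imsetP; exists v; rewrite ?setU11 // setU1K // -in_setC.
Qed.

Lemma card_le_of_no_K43e_pattern E :
  {in E, forall t, #|t| = 3%N} ->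
  (forall Q, #|Q| = 4%N -> ~~ (K43e_pattern Q \subset E)) ->
  (#|E| <= 28)%N.
Proof.
move=> E3 no_pattern.
have pattern_edges_le4 Q : #|Q| = 4%N -> (#|E :&: K43e_pattern Q| <= 4)%N.
  move=> Q4; rewrite -ltnS -Q4; apply: leq_trans (card_K43e_pattern Q).
  rewrite proper_card // properEneq subsetIr andbT setIC.
  by apply: contraNneq (no_pattern _ Q4) => <-; rewrite subsetIr.
have double_count : (\sum_(t in E) #|K43e_patterns_at t|
    = \sum_(Q : {set T} | #|Q| == 4%N) #|E :&: K43e_pattern Q|)%N.
  under eq_bigr do rewrite card_set_andE.
  rewrite exchange_big; apply: eq_bigr => Q _.
  by rewrite -card_set_andE; apply: eq_card => t; rewrite !inE.
rewrite -(@leq_pmul2l 5) // mulnC -sum_nat_const.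
apply: leq_trans (_ : \sum_(t in E) #|K43e_patterns_at t| <= _)%N.
  by apply: leq_sum => t tE; apply: card_K43e_patterns_at (E3 _ tE).
rewrite double_count.
apply: leq_trans (_ : \sum_(Q : {set T} | #|Q| == 4%N) 4 <= _)%N.
  by apply: leq_sum => Q /eqP; apply: pattern_edges_le4.
rewrite sum_nat_const (eq_card (B := [set Q : {set T} | #|Q| == 4%N])) => [|Q].
  by rewrite card_draws card7.
by rewrite inE.
Qed.

End K43ePattern.

Lemma imset_set3 (T T' : finType) (f : T -> T') (a b c : T) :
  f @: [set a; b; c] = [set f a; f b; f c].
Proof. by rewrite !imsetU !imset_set1. Qed.

Lemma K43e_copy n (E : {set {set 'I_n}}) (p q r s u v w : 'I_n) :
  uniq [:: p; q; r; s; u; v; w] ->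
  [set p; q; r] \in E -> [set p; q; s] \in E -> [set p; r; s] \in E ->
  [set q; r; s] \in E -> [set u; v; w] \in E -> contains_copy K43e E.
Proof.
move=> uniq7 e1 e2 e3 e4 e5.
pose f (i : 'I_7) := nth p [:: p; q; r; s; u; v; w] i.
exists f; split=> [i j /eqP|e].
  by rewrite nth_uniq // => /eqP/val_inj.
rewrite !inE => /orP[/orP[/orP[/orP[]|]|]|] /eqP->;
  by rewrite imset_set3 /f !inordK.
Qed.

Lemma setD1_rot (T : finType) (l : seq T) k x rest :
  uniq l -> rot k l = x :: rest -> [set y in l] :\ x = [set y in rest].
Proof.
move=> ul e; have /andP[xr _] : uniq (x :: rest) by rewrite -e rot_uniq.
apply/setP => y; rewrite !inE -(mem_rot k) e inE.
by case: eqVneq => [->|]; rewrite ?(negbTE xr).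
Qed.

Lemma set_seq3 (T : finType) (a b c : T) : [set x in [:: a; b; c]] = [set a; b; c].
Proof. by apply/setP => x; rewrite !inE orbA. Qed.

Lemma set_mem_rot (T : finType) k (l : seq T) : [set x in rot k l] = [set x in l].
Proof. by apply/setP => x; rewrite !inE mem_rot. Qed.

Lemma K43e_pattern_subset_copy n (E : {set {set 'I_n}}) (Q : {set 'I_n}) :
  #|Q| = 4%N -> #|~: Q| = 3%N -> K43e_pattern Q \subset E -> contains_copy K43e E.
Proof.
move=> Q4 QC3 /subsetP QE.
have QCE : ~: Q \in E by apply: QE; rewrite !inE eqxx orbT.
have QD1E k x rest : rot k (enum Q) = x :: rest -> [set y in rest] \in E.
  move=> e; have xQ : x \in Q by rewrite -mem_enum -(mem_rot k) e mem_head.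
  rewrite -(setD1_rot (enum_uniq _) e); apply: QE; rewrite !inE; apply/orP; left.
  apply/imsetP; exists x; rewrite // (_ : [set y in enum Q] = Q) //.
  by apply/setP => y; rewrite inE mem_enum.
have uniq7 : uniq (enum Q ++ enum (~: Q)).
  by rewrite cat_uniq !enum_uniq /= andbT; apply/hasPn => x; rewrite !mem_enum inE.
have eQC : ~: Q = [set x in enum (~: Q)] by apply/setP => x; rewrite inE mem_enum.
move: uniq7 eQC QD1E; rewrite !cardE in Q4 QC3.
case: (enum Q) Q4 => [|p [|q [|r [|s []]]]] // _.
case: (enum (~: Q)) QC3 => [|u [|v [|w []]]] // _ uniq7 eQC QD1E.
apply: (K43e_copy uniq7); rewrite -set_seq3.
- exact: QD1E 3 s _ erefl.
- by rewrite -(set_mem_rot 2); apply: QD1E 2 r _ erefl.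
- by rewrite -(set_mem_rot 1); apply: QD1E 1 q _ erefl.
- exact: QD1E 0 p _ erefl.
- by rewrite -eQC.
Qed.

Section LagrangianBound.
Import boolp classical_sets.
Local Open Scope classical_set_scope.

Lemma lagrangian_le (R : realType) n (E : {set {set 'I_n}}) (c : R) : 0 <= c ->
  (forall x, simplex_on finset.setT x -> lag_poly E x <= c) -> lagrangian R E <= c.
Proof.
move=> c_ge0 bound; rewrite /lagrangian /lagrangian_on.
set S := [set lag_poly E x | x in _].
have [[s Ss] | S0] := pselect (S !=set0).
  by apply: ge_sup; [exists s | move=> _ [x Sx <-]; apply: bound].
by rewrite (_ : S = set0) ?sup0 // -subset0 => s Ss; apply: S0; exists s.
Qed.
End LagrangianBound.

Lemma card_K43e_free_le n (E : {set {set 'I_n}}) :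
  is_3graph E -> K43e_free E -> (n <= 7)%N -> (#|E| <= 28)%N.
Proof.
move=> E3 E_free; rewrite leq_eqVlt ltnS => /orP[/eqP n7 | n6].
  subst n; apply: card_le_of_no_K43e_pattern; rewrite ?card_ord //.
  move=> Q Q4; apply/negP => QE; apply: E_free.
  apply: K43e_pattern_subset_copy QE => //.
  by apply/eqP; rewrite -(eqn_add2l #|Q|) cardsC card_ord Q4.
have ET : E \subset triples n by apply/subsetP => t /E3 t3; rewrite inE t3.
apply: leq_trans (subset_leq_card ET) _; rewrite card_triples.
exact: leq_trans (leq_bin2l 3 n6) _.
Qed.

Lemma lt_5_54_sqrt3_18 (R : realType) : 5 / 54 < Num.sqrt (3 : R) / 18.
Proof.
suff : 5 / 3 < Num.sqrt (3 : R) by lra.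
by rewrite -[5 / 3]ger0_norm -?sqrtr_sqr ?ltr_sqrt //; lra.
Qed.

Theorem claim5p6 (R : realType) (n : nat) (E : {set {set 'I_n}}) :
  is_3graph E -> @dense R n E -> K43e_free E ->
  @lagrangian R n E > Num.sqrt (3 : R) / 18 ->
  (8 <= n)%N.
Proof.
move=> E3 _ E_free lag_gt; rewrite leqNgt; apply/negP => n_le7.
have E28 := card_K43e_free_le E3 E_free n_le7.
suff : lagrangian R E <= 5 / 54 by have := lt_5_54_sqrt3_18 R; lra.
apply: lagrangian_le => [|x [x_ge0 [_ sum1]]]; first lra.
pose f := widen_ord (n_le7 : (n <= 7)%N).
have f_inj : injective f by move=> i j [] /val_inj.
rewrite -(lag_poly_image_graph f_inj); apply: lag_poly_le_5_54.
- exact: image_graph_3graph.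
- by rewrite card_image_graph.
- exact: push_weights_ge0.
- by rewrite sum_push_weights.
Qed.
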